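(* Consider the following scheduling market. There are $d$ machine types; $M_k$ is the finite set of machines of type $k$, and the goods are all machines $(j,k)$, $j\in M_k$, each of supply $1$. Each agent (job) $i\in A$ has requirements $r_{ik}\ge0$ and covering constraints $\sum_{j\in M_k}x_{ijk}\ge r_{ik}$ for all $k\in[d]$, $x_{ijk}\ge0$. All agents face the same delay $d_{jk}\ge0$ on machine $j$ of type $k$. Assume $|M_k|\ge\sum_{i\in A}r_{ik}$ for every $k$. Then this market satisfies extensibility.
   Context: An allocation $X\ge0$ is supply respecting if each good is allocated in total at most $1$. For a set of agents $S$, an allocation $X$ is jointly optimal for $S$ if it satisfies the covering constraints of all $i\in S$, is supply respecting, and minimizes the total delay $\sum_{i\in S}\sum_{k}\sum_{j\in M_k}d_{jk}x_{ijk}$ among such allocations. A market satisfies extensibility if for every $S\subset A$, every $X$ jointly optimal for $S$ and every $i\in A\setminus S$, there is $X'$ jointly optimal for $S\cup\{i\}$ such that every agent $i'\in S$ has the same delay $\sum_{k,j}d_{jk}x'_{i'jk}=\sum_{k,j}d_{jk}x_{i'jk}$. *)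

From HB Require Import structures.
From mathcomp Require Import all_boot all_order all_algebra.
Set Implicit Arguments. Unset Strict Implicit. Unset Printing Implicit Defensive.
Import Order.TTheory GRing.Theory Num.Theory.
Local Open Scope ring_scope.

(* Goods: machines, a finite type [Mach]; machine
     [j] has type [typ j], so M_k = [set j | typ j == k].  Each machine has
     supply 1.
   - An allocation is [X : Ag -> Mach -> R]; X i j is x_{i j (typ j)}. *)

Section Market.
Variables (R : realFieldType) (Ag Mach : finType) (d : nat) (typ : Mach -> 'I_d).
Variables (r : Ag -> 'I_d -> R) (del : Mach -> R).

Definition agent_delay (X : Ag -> Mach -> R) (i : Ag) : R :=
  \sum_(j : Mach) del j * X i j.

Definition total_delay (S : {set Ag}) (X : Ag -> Mach -> R) : R :=
  \sum_(i in S) agent_delay X i.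

Definition covers (S : {set Ag}) (X : Ag -> Mach -> R) : Prop :=
  forall i, i \in S ->
    (forall j, 0 <= X i j) /\
    (forall k : 'I_d, r i k <= \sum_(j | typ j == k) X i j).

Definition supply_respecting (S : {set Ag}) (X : Ag -> Mach -> R) : Prop :=
  forall j : Mach, \sum_(i in S) X i j <= 1.

Definition jointly_optimal (S : {set Ag}) (X : Ag -> Mach -> R) : Prop :=
  [/\ covers S X, supply_respecting S X &
      forall Y, covers S Y -> supply_respecting S Y ->
        total_delay S X <= total_delay S Y].

Definition extensibility : Prop :=
  forall (S : {set Ag}) (X : Ag -> Mach -> R), jointly_optimal S X ->
  forall i, i \notin S ->
  exists X', jointly_optimal (i |: S) X' /\
    forall i', i' \in S -> agent_delay X' i' = agent_delay X i'.

End Market.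

(* In an optimal allocation each agent can be trimmed to cover its requirements
   exactly without changing any delay, since surplus only sits on zero-delay
   machines.  Optimality then forces a greedy structure inside every machine
   type: a machine carries load only if every strictly faster machine of the
   same type is full.  Hence each type k has a threshold delay lam_k such that
   machines below it are full and machines above it are empty; the newcomer
   fills the free capacity below the threshold and a common fraction of the free
   capacity at it, and the capacity hypothesis leaves exactly enough room.  The
   result is optimal by a Lagrangian argument with prices lam_k on the per-type
   demands: the total delay splits as
     sum_j (del_j - lam_(typ j)) load_j + sum_k lam_k (load of type k),
   and the new allocation minimises both parts among feasible allocations. *)

From HB Require Import structures.
From mathcomp Require Import all_boot all_order all_algebra.
From mathcomp Require Import lra.
Import Order.TTheory GRing.Theory Num.Theory.
Set Implicit Arguments. Unset Strict Implicit.
Local Open Scope ring_scope.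

Section Sums.
Variables (R : realFieldType) (T : finType).
Implicit Types (P Q : pred T) (F h : T -> R).

Lemma sum_delta P a F :
  \sum_(b | P b) (b == a)%:R * F b = (P a)%:R * F a.
Proof.
case Pa: (P a).
  rewrite (bigD1 a) //= eqxx mul1r big1 ?addr0 // => b /andP[_ /negbTE ->].
  by rewrite mul0r.
rewrite mul0r big1 // => b Pb; case: eqP => [eba|]; last by rewrite mul0r.
by move: Pb; rewrite eba Pa.
Qed.

Lemma ler_sum_subset P Q F :
  (forall j, P j -> Q j) -> (forall j, Q j -> 0 <= F j) ->
  \sum_(j | P j) F j <= \sum_(j | Q j) F j.
Proof.
move=> PQ F0; rewrite [X in _ <= X](bigID P) /=.
rewrite (eq_bigl P); last by move=> j; case Pj: (P j); rewrite ?andbT ?andbF ?PQ.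
by rewrite lerDl sumr_ge0 // => j /andP[/F0].
Qed.

Lemma sum_split_cmp P h lam F :
  \sum_(j | P j) F j = \sum_(j | P j && (h j < lam)) F j
     + \sum_(j | P j && (h j == lam)) F j + \sum_(j | P j && (lam < h j)) F j.
Proof.
rewrite (bigID (fun j => h j < lam)) /= -addrA; congr (_ + _).
rewrite (bigID (fun j => h j == lam)) /=; congr (_ + _); apply: eq_bigl => j;
  by case: ltgtP; rewrite ?andbT ?andbF.
Qed.

Lemma sum_split_le P h lam F :
  \sum_(j | P j && (h j <= lam)) F j = \sum_(j | P j && (h j < lam)) F j
     + \sum_(j | P j && (h j == lam)) F j.
Proof.
rewrite (bigID (fun j => h j < lam)) /=; congr (_ + _); apply: eq_bigl => j;
  by case: ltgtP; rewrite ?andbT ?andbF.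
Qed.

Lemma exists_threshold P h (t : R) :
  (forall j, P j -> 0 <= h j) -> 0 <= t <= \sum_(j | P j) 1 ->
  exists2 lam, 0 <= lam &
    \sum_(j | P j && (h j < lam)) 1 <= t <= \sum_(j | P j && (h j <= lam)) 1.
Proof.
move=> h_ge0 /andP[t_ge0 t_le].
pose c x := \sum_(j | P j && (h j <= x)) (1 : R).
case: (pickP [pred j | P j && (t <= c (h j))]) => [j0 Qj0 | noQ].
  case: (arg_minP h Qj0) => j /andP[Pj t_le_cj] j_min.
  exists (h j); first exact: h_ge0.
  rewrite t_le_cj andbT.
  case: (pickP [pred l | P l && (h l < h j)]) => [l0 Ll0 | noL]; last first.
    by rewrite big_pred0.
  case: (arg_maxP h Ll0) => l /andP[Pl hl_lt] l_max.
  have cl_lt_t : c (h l) < t.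
    rewrite ltNge; apply/negP => t_le_cl.
    by have := j_min l; rewrite /= Pl t_le_cl => /(_ isT); rewrite leNgt hl_lt.
  apply: ltW; apply: le_lt_trans cl_lt_t.
  apply: ler_sum_subset => // m /andP[Pm hm]; rewrite Pm /=.
  by apply: l_max; rewrite /= Pm hm.
exists 0 => //.
case: (pickP P) => [j0 Pj0 | noP].
  case: (arg_maxP h Pj0) => j Pj j_max.
  have := noQ j; rewrite /= Pj /= => /negbT/negP[].
  apply: le_trans t_le _; apply: ler_sum_subset => // m Pm.
  by rewrite Pm; apply: j_max.
have sum0 (Q : pred T) : \sum_(j | P j && Q j) (1 : R) = 0.
  by rewrite big_pred0 // => j; rewrite noP.
by rewrite !sum0 le_eqVlt; move: t_le; rewrite big_pred0 // => t_le0; lra.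
Qed.

End Sums.

Lemma exists_scale (R : realFieldType) (a b : R) :
  0 <= a <= b -> exists2 rho, 0 <= rho <= 1 & rho * b = a.
Proof.
move=> /andP[a_ge0 a_le_b].
have [b0 | b_neq0] := eqVneq b 0.
  by exists 0; rewrite ?lexx ?ler01 // mul0r; apply/eqP; rewrite eq_le a_ge0 -b0 a_le_b.
have b_gt0 : 0 < b by rewrite lt_def b_neq0 (le_trans a_ge0).
exists (a / b); last by rewrite divfK.
by rewrite divr_ge0 ?(ltW b_gt0) //= ler_pdivrMr // mul1r.
Qed.

Section Greedy.
Variables (R : realFieldType) (T : finType) (P : pred T) (h w : T -> R).
Hypothesis w_ge0 : forall j, 0 <= w j.
Hypothesis w_le1 : forall j, w j <= 1.
Hypothesis greedy :
  forall j j', P j -> P j' -> h j < h j' -> w j < 1 -> w j' = 0.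

Lemma greedy_zero_above lam :
  \sum_(j | P j) w j <= \sum_(j | P j && (h j <= lam)) 1 ->
  forall j, P j -> lam < h j -> w j = 0.
Proof.
move=> w_le j Pj hj; apply/eqP; rewrite eq_le w_ge0 andbT leNgt.
apply/negP => wj_gt0.
have full m : P m -> h m <= lam -> 1 <= w m.
  move=> Pm hm; rewrite leNgt; apply/negP => wm_lt1.
  by move: wj_gt0; rewrite (greedy Pm Pj (le_lt_trans hm hj) wm_lt1) ltxx.
have : \sum_(m | P m && (h m <= lam)) 1 + w j <= \sum_(m | P m) w m.
  rewrite [X in _ <= X](bigID (fun m => h m <= lam)) /=; apply: lerD.
    by apply: ler_sum => m /andP[Pm hm]; apply: full.
  rewrite (bigD1 j) /=; last by rewrite Pj -ltNge.
  by rewrite lerDl sumr_ge0.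
lra.
Qed.

Lemma greedy_residual_bounds lam (s : R) :
  0 <= s ->
  \sum_(j | P j && (h j < lam)) 1 <= \sum_(j | P j) w j + s
    <= \sum_(j | P j && (h j <= lam)) 1 ->
  0 <= s - \sum_(j | P j && (h j < lam)) (1 - w j)
    <= \sum_(j | P j && (h j == lam)) (1 - w j).
Proof.
move=> s_ge0 /andP[lo hi].
have w_above0 : forall j, P j && (lam < h j) -> w j = 0.
  move=> j /andP[Pj hj]; apply: greedy_zero_above Pj hj.
  by apply: le_trans hi; rewrite lerDl.
have sum_w : \sum_(j | P j) w j = \sum_(j | P j && (h j <= lam)) w j.
  by rewrite (sum_split_cmp P h lam) sum_split_le [X in _ + X]big1 ?addr0.
apply/andP; split; last first.
  by move: sum_w hi; rewrite !sumrB !sum_split_le; lra.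
rewrite subr_ge0.
case: (pickP [pred l | [&& P l, h l == lam & 0 < w l]])
  => [l /and3P[Pl /eqP hl wl_gt0] | none].
  rewrite big1 // => m /andP[Pm hm]; apply/eqP.
  rewrite subr_eq0 eq_le w_le1 andbT leNgt; apply/negP => wm_lt1.
  by move: wl_gt0; rewrite (greedy Pm Pl _ wm_lt1) ?ltxx ?hl.
have w_at0 : \sum_(j | P j && (h j == lam)) w j = 0.
  apply: big1 => m /andP[Pm hm]; have := none m; rewrite /= Pm hm /=.
  by move/negbT; rewrite -leNgt => wm_le0; apply/eqP; rewrite eq_le wm_le0 w_ge0.
by move: sum_w lo; rewrite sum_split_le w_at0 addr0 sumrB; lra.
Qed.

Lemma exists_fill lam (s : R) :
  0 <= s ->
  \sum_(j | P j && (h j < lam)) 1 <= \sum_(j | P j) w j + s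
    <= \sum_(j | P j && (h j <= lam)) 1 ->
  exists y : T -> R, [/\ forall j, 0 <= y j <= 1 - w j,
    forall j, h j < lam -> y j = 1 - w j,
    forall j, lam < h j -> y j = 0 &
    \sum_(j | P j) y j = s].
Proof.
move=> s_ge0 bounds.
have [rho /andP[rho_ge0 rho_le1] rho_at] :=
  exists_scale (greedy_residual_bounds s_ge0 bounds).
exists (fun j => if h j < lam then 1 - w j
                 else if h j == lam then rho * (1 - w j) else 0); split.
- move=> j; have := w_le1 j; have := w_ge0 j.
  by case: ifP => _; [|case: ifP => _]; move=> *; apply/andP; split; nra.
- by move=> j ->.
- by move=> j hj; rewrite lt_gtF // gt_eqF.
rewrite (sum_split_cmp P h lam) [X in _ + X = _]big1; last first.
  by move=> j /andP[_ hj]; rewrite lt_gtF // gt_eqF.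
rewrite [X in X + _ + _](eq_bigr (fun j => 1 - w j)); last by move=> j /andP[_ ->].
rewrite [X in _ + X + _](eq_bigr (fun j => rho * (1 - w j))); last first.
  by move=> j /andP[_ /eqP ->]; rewrite ltxx eqxx.
by rewrite -mulr_sumr rho_at; lra.
Qed.

End Greedy.

Section Market.
Variables (R : realFieldType) (Ag Mach : finType) (d : nat) (typ : Mach -> 'I_d).
Variables (r : Ag -> 'I_d -> R) (del : Mach -> R).
Hypothesis r_ge0 : forall i k, 0 <= r i k.
Hypothesis del_ge0 : forall j, 0 <= del j.

Local Notation covers := (covers typ r).
Local Notation optimal := (jointly_optimal typ r del).
Local Notation delay := (agent_delay del).

Definition load (S : {set Ag}) (X : Ag -> Mach -> R) (j : Mach) : R :=
  \sum_(i in S) X i j.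

Lemma optimal_row_best_response S X a (z : Mach -> R) :
  optimal S X -> a \in S -> (forall j, 0 <= z j) ->
  (forall k, r a k <= \sum_(j | typ j == k) z j) ->
  (forall j, load (S :\ a) X j + z j <= 1) ->
  delay X a <= \sum_j del j * z j.
Proof.
move=> [coversX _ X_min] aS z_ge0 z_covers z_supply.
pose Y b j := if b == a then z j else X b j.
have rows_Y b : b \in S :\ a -> Y b = X b.
  by rewrite in_setD1 /Y => /andP[/negbTE ->].
have coversY : covers S Y.
  move=> b bS; rewrite /Y; case: eqP => [->|_]; last exact: coversX.
  by split; [exact: z_ge0 | exact: z_covers].
have supplyY : supply_respecting S Y.
  move=> j; rewrite (big_setD1 a aS) /= {1}/Y eqxx addrC.
  suff -> : \sum_(b in S :\ a) Y b j = load (S :\ a) X j by apply: z_supply.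
  by apply: eq_bigr => b /rows_Y ->.
have := X_min Y coversY supplyY.
rewrite /total_delay !(big_setD1 a aS) /=.
rewrite [Z in _ <= _ + Z](eq_bigr (delay X)) => [|b /rows_Y]; last first.
  by rewrite /agent_delay => ->.
by rewrite lerD2r /agent_delay /Y eqxx.
Qed.

Lemma optimal_no_slack S X a j :
  optimal S X -> a \in S ->
  r a (typ j) < \sum_(l | typ l == typ j) X a l -> del j * X a j = 0.
Proof.
move=> optX aS slack; have [coversX supplyX _] := optX.
have [X_ge0 X_covers] := coversX a aS.
apply/eqP; rewrite mulf_eq0; apply/contraT => /norP[del_neq0 X_neq0].
have del_gt0 : 0 < del j by rewrite lt_def del_neq0 del_ge0.
have X_gt0 : 0 < X a j by rewrite lt_def X_neq0 X_ge0.
pose eps := Order.min (\sum_(l | typ l == typ j) X a l - r a (typ j)) (X a j).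
have eps_gt0 : 0 < eps by rewrite lt_min subr_gt0 slack X_gt0.
have eps_le_slack : eps <= \sum_(l | typ l == typ j) X a l - r a (typ j).
  by rewrite ge_min lexx.
have eps_le_X : eps <= X a j by rewrite ge_min lexx orbT.
pose z l := X a l - (l == j)%:R * eps.
have : delay X a <= delay X a - del j * eps.
  have -> : delay X a - del j * eps = \sum_l del l * z l.
    rewrite /z; under eq_bigr do rewrite mulrBr mulrCA.
    by rewrite sumrB (sum_delta xpredT j (fun l => del l * eps)) mul1r.
  apply: (optimal_row_best_response optX aS) => [l|k|l].
  - rewrite /z; case: eqP => [->|_]; last by rewrite mul0r subr0.
    by rewrite mul1r subr_ge0.
  - rewrite /z sumrB sum_delta; have := X_covers k.
    by case: eqP => [<-|_]; rewrite ?mul1r ?mul0r ?subr0; lra.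
  - have := supplyX l; rewrite (big_setD1 a aS) /= /load /z.
    have : 0 <= (l == j)%:R * eps by rewrite mulr_ge0 ?ler0n ?ltW.
    lra.
have := mulr_gt0 del_gt0 eps_gt0; lra.
Qed.

Lemma optimal_trim S X :
  optimal S X ->
  exists X2, [/\ optimal S X2,
    forall a k, a \in S -> \sum_(j | typ j == k) X2 a j = r a k &
    forall a, a \in S -> delay X2 a = delay X a].
Proof.
move=> optX; have [coversX supplyX X_min] := optX.
pose cov a k := \sum_(j | typ j == k) X a j.
pose f a k := if r a k < cov a k then r a k / cov a k else 1.
pose X2 a j := X a j * f a (typ j).
have f_ge0 a k : 0 <= f a k.
  rewrite /f; case: ifP => // slack.
  by rewrite divr_ge0 ?r_ge0 ?(le_trans (r_ge0 a k) (ltW slack)).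
have f_le1 a k : f a k <= 1.
  rewrite /f; case: ifP => // slack.
  by rewrite ler_pdivrMr ?mul1r ?ltW ?(le_lt_trans (r_ge0 a k) slack).
have X_ge0 a j : a \in S -> 0 <= X a j by move=> aS; case: (coversX a aS).
have X2_ge0 a j : a \in S -> 0 <= X2 a j.
  by move=> aS; rewrite mulr_ge0 ?X_ge0.
have X2_le a j : a \in S -> X2 a j <= X a j.
  by move=> aS; rewrite ler_piMr ?X_ge0.
have X2_tight a k : a \in S -> \sum_(j | typ j == k) X2 a j = r a k.
  move=> aS; rewrite /X2 (eq_bigr (fun j => X a j * f a k)); last first.
    by move=> j /eqP ->.
  rewrite -mulr_suml -/(cov a k) /f; case: ifP => slack.
    by rewrite mulrC divfK // gt_eqF // (le_lt_trans (r_ge0 a k) slack).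
  have := (coversX a aS).2 k; rewrite -/(cov a k) mulr1 => r_le.
  by apply/eqP; rewrite eq_le r_le leNgt slack.
have X2_delay a : a \in S -> delay X2 a = delay X a.
  move=> aS; apply: eq_bigr => j _; rewrite /X2 /f; case: ifP => slack.
    by rewrite mulrA (optimal_no_slack optX aS slack) mul0r.
  by rewrite mulr1.
exists X2; split => //; split.
- by move=> a aS; split => [j|k]; rewrite ?X2_ge0 ?X2_tight.
- by move=> j; apply: le_trans (supplyX j); apply: ler_sum => a; apply: X2_le.
- move=> Y coversY supplyY; apply: le_trans (X_min Y coversY supplyY).
  by rewrite /total_delay (eq_bigr _ X2_delay).
Qed.

Lemma optimal_load_greedy S X j j' :
  optimal S X -> typ j = typ j' -> del j < del j' -> load S X j < 1 ->
  load S X j' = 0.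
Proof.
move=> optX typ_eq del_lt load_lt1; have [coversX supplyX _] := optX.
have X_ge0 a l : a \in S -> 0 <= X a l by move=> aS; case: (coversX a aS).
apply/eqP; rewrite eq_le sumr_ge0 ?andbT => [|a /X_ge0 //].
rewrite leNgt; apply/negP => load_gt0.
have [a aS Xa_gt0] : exists2 a, a \in S & 0 < X a j'.
  case: (pickP [pred a | (a \in S) && (0 < X a j')]) => [a /andP[] | none].
    by exists a.
  move: load_gt0; rewrite /load big1 ?ltxx // => a aS.
  have := none a; rewrite /= aS /= => /negbT; rewrite -leNgt => Xa_le0.
  by apply/eqP; rewrite eq_le Xa_le0 X_ge0.
have neq_jj' : j != j' by apply: contraTneq del_lt => ->; rewrite ltxx.
have load_split l : load S X l = X a l + load (S :\ a) X l.
  by rewrite /load (big_setD1 a aS).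
pose eps := Order.min (1 - load S X j) (X a j').
have eps_gt0 : 0 < eps by rewrite lt_min subr_gt0 load_lt1 Xa_gt0.
have eps_le_free : eps <= 1 - load S X j by rewrite ge_min lexx.
have eps_le_X : eps <= X a j' by rewrite ge_min lexx orbT.
pose z l := X a l + (l == j)%:R * eps - (l == j')%:R * eps.
have : delay X a <= delay X a + del j * eps - del j' * eps.
  have -> : delay X a + del j * eps - del j' * eps = \sum_l del l * z l.
    rewrite /z; under eq_bigr do rewrite mulrBr mulrDr !(mulrCA (del _) _ eps).
    by rewrite sumrB big_split /= !(sum_delta xpredT _ (fun l => del l * eps)) !mul1r.
  apply: (optimal_row_best_response optX aS) => [l|k|l].
  - rewrite /z; have := X_ge0 a l aS.
    case: (eqVneq l j) => [->|_]; first by rewrite (negbTE neq_jj') mul1r mul0r; lra.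
    case: (eqVneq l j') => [->|_]; rewrite ?mul1r ?mul0r; lra.
  - rewrite /z sumrB big_split /= !sum_delta typ_eq; have := (coversX a aS).2 k; lra.
  - have := supplyX l; rewrite -/(load S X l) load_split /z.
    case: (eqVneq l j) => [->|_].
      by rewrite (negbTE neq_jj') mul1r mul0r; move: eps_le_free; rewrite load_split; lra.
    case: (eqVneq l j') => [->|_]; rewrite ?mul1r ?mul0r; lra.
have : 0 < (del j' - del j) * eps by rewrite mulr_gt0 ?subr_gt0.
lra.
Qed.

Lemma total_delay_decomp S Y (lam : 'I_d -> R) :
  total_delay del S Y = \sum_j (del j - lam (typ j)) * load S Y j
    + \sum_k lam k * \sum_(j | typ j == k) load S Y j.
Proof.
have -> : \sum_k lam k * \sum_(j | typ j == k) load S Y j =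
          \sum_j lam (typ j) * load S Y j.
  rewrite (partition_big typ xpredT) //=; apply: eq_bigr => k _.
  by rewrite mulr_sumr; apply: eq_big => [j|j /eqP ->].
rewrite -big_split /total_delay /agent_delay exchange_big /=.
by apply: eq_bigr => j _; rewrite -mulrDl subrK /load mulr_sumr.
Qed.

Lemma threshold_optimal S Z (lam : 'I_d -> R) :
  (forall k, 0 <= lam k) -> covers S Z -> supply_respecting S Z ->
  (forall j, del j < lam (typ j) -> load S Z j = 1) ->
  (forall j, lam (typ j) < del j -> load S Z j = 0) ->
  (forall k, \sum_(j | typ j == k) load S Z j = \sum_(b in S) r b k) ->
  optimal S Z.
Proof.
move=> lam_ge0 coversZ supplyZ load_below load_above load_type.
split => // Y coversY supplyY; rewrite !(total_delay_decomp _ _ lam); apply: lerD.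
  apply: ler_sum => j _.
  have : load S Y j <= 1 := supplyY j.
  have : 0 <= load S Y j by apply: sumr_ge0 => b /coversY[].
  case: (ltgtP (del j) (lam (typ j))) => [below | above | ->].
  - by rewrite load_below //; nra.
  - by rewrite load_above // mulr0; nra.
  - by rewrite subrr !mul0r.
apply: ler_sum => k _; apply: ler_wpM2l => //; rewrite load_type.
by rewrite /load exchange_big /=; apply: ler_sum => b /coversY[_]; apply.
Qed.

Lemma optimal_residual_fill S X (s : 'I_d -> R) :
  optimal S X -> (forall k, 0 <= s k) ->
  (forall k, \sum_(j | typ j == k) load S X j + s k <= \sum_(j | typ j == k) 1) ->
  exists2 lam : 'I_d -> R, forall k, 0 <= lam k &
  exists y : Mach -> R, [/\ forall j, 0 <= y j <= 1 - load S X j,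
    forall j, del j < lam (typ j) -> y j + load S X j = 1,
    forall j, lam (typ j) < del j -> y j + load S X j = 0 &
    forall k, \sum_(j | typ j == k) y j = s k].
Proof.
move=> optX s_ge0 room; have [coversX supplyX _] := optX.
set w := load S X.
have w_ge0 j : 0 <= w j by apply: sumr_ge0 => b /coversX[].
have w_le1 j : w j <= 1 := supplyX j.
have greedy k j j' : typ j == k -> typ j' == k -> del j < del j' -> w j < 1 ->
    w j' = 0.
  by move=> /eqP tj /eqP tj'; apply: optimal_load_greedy; rewrite // tj tj'.
have threshold k : exists2 lam, 0 <= lam &
    \sum_(j | (typ j == k) && (del j < lam)) 1 <= \sum_(j | typ j == k) w j + s k
      <= \sum_(j | (typ j == k) && (del j <= lam)) 1.
  apply: exists_threshold => [j _|]; first exact: del_ge0.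
  by rewrite room addr_ge0 ?sumr_ge0.
have [lam lam_ge0 lam_bounds] := fin_all_exists2 threshold.
have [y y_spec] := fin_all_exists (fun k =>
  exists_fill w_ge0 w_le1 (greedy k) (s_ge0 k) (lam_bounds k)).
have w_above j : lam (typ j) < del j -> w j = 0.
  move: (lam_bounds (typ j)) => /andP[_ hi].
  apply: (greedy_zero_above w_ge0 (greedy (typ j))) => //.
  by apply: le_trans hi; rewrite lerDl s_ge0.
exists lam => //; exists (fun j => y (typ j) j); split => [j | j | j | k].
- by have [y_bounds _ _ _] := y_spec (typ j); apply: y_bounds.
- by have [_ y_below _ _] := y_spec (typ j); move=> below; rewrite y_below ?subrK.
- have [_ _ y_above _] := y_spec (typ j).
  by move=> above; rewrite y_above // w_above // addr0.
have [_ _ _ y_sum] := y_spec k.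
by rewrite (eq_bigr (y k)) // => j /eqP ->.
Qed.

Lemma optimal_extend S X i :
  optimal S X -> (forall a k, a \in S -> \sum_(j | typ j == k) X a j = r a k) ->
  i \notin S ->
  (forall k, \sum_(b in i |: S) r b k <= \sum_(j | typ j == k) 1) ->
  exists2 X', optimal (i |: S) X' & forall a j, a \in S -> X' a j = X a j.
Proof.
move=> optX tight iS cap; have [coversX _ _] := optX.
have demand k : \sum_(b in i |: S) r b k = \sum_(j | typ j == k) load S X j + r i k.
  rewrite big_setU1 //= addrC /load exchange_big /=.
  by congr (_ + _); apply: eq_bigr => b bS; rewrite tight.
have room k : \sum_(j | typ j == k) load S X j + r i k <= \sum_(j | typ j == k) 1.
  by rewrite -demand cap.
have [lam lam_ge0 [y [y_bounds y_below y_above y_sum]]] :=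
  optimal_residual_fill optX (r_ge0 i) room.
pose X' a j := if a == i then y j else X a j.
have X'_rows a j : a \in S -> X' a j = X a j.
  by move=> aS; rewrite /X' ifN //; apply: contraNneq iS => <-.
have load_X' j : load (i |: S) X' j = y j + load S X j.
  rewrite /load big_setU1 //= {1}/X' eqxx; congr (_ + _).
  by apply: eq_bigr => b /X'_rows.
exists X'; last exact: X'_rows.
apply: (threshold_optimal lam_ge0) => [a | j | j | j | k].
- rewrite in_setU1 => /orP[/eqP -> | aS].
    split => [j | k]; rewrite /X' eqxx; last by rewrite y_sum.
    by case/andP: (y_bounds j).
  have [X_ge0 X_covers] := coversX a aS.
  split => [j | k]; first by rewrite X'_rows.
  by rewrite (eq_bigr (X a)) => [|j _]; [exact: X_covers | exact: X'_rows].
- by rewrite -/(load (i |: S) X' j) load_X'; case/andP: (y_bounds j) => _; lra.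
- by move=> below; rewrite load_X' y_below.
- by move=> above; rewrite load_X' y_above.
by rewrite (eq_bigr _ (fun j _ => load_X' j)) big_split /= y_sum demand addrC.
Qed.

End Market.

Theorem lemmaD1 (R : realFieldType) (Ag Mach : finType) (d : nat)
  (typ : Mach -> 'I_d) (r : Ag -> 'I_d -> R) (del : Mach -> R)
  (hr : forall i k, 0 <= r i k)
  (hdel : forall j, 0 <= del j)
  (hcap : forall k : 'I_d,
     \sum_(i : Ag) r i k <= (#|[set j | typ j == k]|)%:R) :
  extensibility typ r del.
Proof.
move=> S X optX i iS.
have [X2 [optX2 tight same_delay]] := optimal_trim hr hdel optX.
have cap k : \sum_(b in i |: S) r b k <= \sum_(j | typ j == k) 1.
  have -> : \sum_(j | typ j == k) (1 : R) = #|[set j | typ j == k]|%:R.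
    by rewrite sumr_const cardsE.
  apply: le_trans (hcap k).
  by apply: ler_sum_subset => // b _; apply: hr.
have [X' optX' same_rows] := optimal_extend hr hdel optX2 tight iS cap.
exists X'; split => // a aS; rewrite -same_delay //.
by apply: eq_bigr => j _; rewrite same_rows.
Qed.
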